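(* Let $\mathbb X,\mathbb Y$ be Euclidean spaces, $\Phi\colon\mathbb X\rightrightarrows\mathbb Y$ a set-valued mapping whose graph is closed locally around $(\bar x,\bar y)\in\operatorname{gph}\Phi$, $u\in\mathbb S_{\mathbb X}$, and $\gamma\ge1$. If $\ker D^*_\gamma\Phi((\bar x,\bar y);(u,0))\subset\{0\}$, then $\Phi$ is metrically pseudo-subregular of order $\gamma$ at $(\bar x,\bar y)$ in direction $u$.
   Context: Pseudo-coderivative of order $\gamma$: $x^*\in D^*_\gamma\Phi((\bar x,\bar y);(u,v))(y^* )$ iff there are $u_k\to u$, $v_k\to v$, $t_k\downarrow0$, $x_k^*\to x^*$, $y_k^*\to y^*$ with $(x_k^*,-y_k^*/(t_k\|u_k\|)^{\gamma-1})\in\widehat{\mathcal N}_{\operatorname{gph}\Phi}(\bar x+t_ku_k,\bar y+(t_k\|u_k\|)^\gamma v_k)$ for all $k$ ($\widehat{\mathcal N}$ the regular normal cone); $\ker\Psi=\{y^*\mid 0\in\Psi(y^* )\}$. Metric pseudo-subregularity of order $\gamma$ in direction $u$: there are $\varepsilon,\delta,\kappa>0$ with $\|x-\bar x\|^{\gamma-1}\operatorname{dist}(x,\Phi^{-1}(\bar y))\le\kappa\operatorname{dist}(\bar y,\Phi(x))$ for all $x\in\bar x+\mathbb B_{\varepsilon,\delta}(u)$, where $\mathbb B_{\varepsilon,\delta}(u)=\{w\mid\|\|w\|u-\|u\|w\|\le\delta\|u\|\|w\|,\ \|w\|\le\varepsilon\}$. *)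

From HB Require Import structures.
From mathcomp Require Import all_boot all_order all_algebra.
From mathcomp Require Import boolp classical_sets reals constructive_ereal ereal exp.
Set Implicit Arguments. Unset Strict Implicit. Unset Printing Implicit Defensive.
Import Order.TTheory GRing.Theory Num.Theory.
Local Open Scope classical_set_scope.
Local Open Scope ring_scope.

Section Euclid.
Variable R : realType.

Definition dotv (n : nat) (a b : 'rV[R]_n) : R := \sum_(i < n) a 0 i * b 0 i.
Definition enorm (n : nat) (a : 'rV[R]_n) : R := Num.sqrt (dotv a a).

(* Euclidean distance from a point to a set (+oo for the empty set) *)
Definition edist (n : nat) (x : 'rV[R]_n) (S : set 'rV[R]_n) : \bar R :=
  ereal_inf [set (enorm (x - y))%:E | y in S].

Definition vcvg (n : nat) (a : nat -> 'rV[R]_n) (l : 'rV[R]_n) : Prop :=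
  forall e : R, 0 < e -> exists N : nat, forall k : nat, (N <= k)%N -> enorm (a k - l) < e.

Definition rcvg (a : nat -> R) (l : R) : Prop :=
  forall e : R, 0 < e -> exists N : nat, forall k : nat, (N <= k)%N -> `|a k - l| < e.

Definition gph (n m : nat) (Phi : 'rV[R]_n -> set 'rV[R]_m) : set ('rV[R]_n * 'rV[R]_m) :=
  [set p | Phi p.1 p.2].

Definition dotp (n m : nat) (a b : 'rV[R]_n * 'rV[R]_m) : R := dotv a.1 b.1 + dotv a.2 b.2.
Definition enormp (n m : nat) (a : 'rV[R]_n * 'rV[R]_m) : R :=
  Num.sqrt (dotv a.1 a.1 + dotv a.2 a.2).

(* regular (Fréchet) normal cone of Om at z:
   limsup_{z' -> z, z' in Om} <zeta, z' - z> / |z' - z| <= 0; empty if z ∉ Om *)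
Definition reg_normal (n m : nat) (Om : set ('rV[R]_n * 'rV[R]_m)) (z : 'rV[R]_n * 'rV[R]_m)
  : set ('rV[R]_n * 'rV[R]_m) :=
  [set zeta | Om z /\
     forall e : R, 0 < e -> exists d : R, 0 < d /\
       forall z' : 'rV[R]_n * 'rV[R]_m, Om z' ->
         enormp (z'.1 - z.1, z'.2 - z.2) < d ->
         dotp zeta (z'.1 - z.1, z'.2 - z.2) <= e * enormp (z'.1 - z.1, z'.2 - z.2)].

Definition pseudo_coderiv (n m : nat) (Phi : 'rV[R]_n -> set 'rV[R]_m) (gamma : R)
  (xb : 'rV[R]_n) (yb : 'rV[R]_m) (u : 'rV[R]_n) (v : 'rV[R]_m) (ys : 'rV[R]_m)
  : set 'rV[R]_n :=
  [set xs | exists (uk : nat -> 'rV[R]_n) (vk : nat -> 'rV[R]_m) (tk : nat -> R)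
              (xsk : nat -> 'rV[R]_n) (ysk : nat -> 'rV[R]_m),
     [/\ vcvg uk u /\ vcvg vk v, (forall k, 0 < tk k) /\ rcvg tk 0,
         vcvg xsk xs, vcvg ysk ys &
         forall k : nat,
           reg_normal (gph Phi)
             (xb + tk k *: uk k, yb + ((tk k * enorm (uk k)) `^ gamma) *: vk k)
             (xsk k, - (((tk k * enorm (uk k)) `^ (gamma - 1))^-1) *: ysk k)]].

Definition kerM (n m : nat) (Psi : 'rV[R]_m -> set 'rV[R]_n) : set 'rV[R]_m :=
  [set ys | Psi ys 0].

Definition dir_ball (n : nat) (eps delta : R) (u : 'rV[R]_n) : set 'rV[R]_n :=
  [set w | enorm (enorm w *: u - enorm u *: w) <= delta * enorm u * enorm w
           /\ enorm w <= eps].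

Definition metric_pseudo_subreg (n m : nat) (Phi : 'rV[R]_n -> set 'rV[R]_m) (gamma : R)
  (xb : 'rV[R]_n) (yb : 'rV[R]_m) (u : 'rV[R]_n) : Prop :=
  exists eps delta kappa : R, [/\ 0 < eps, 0 < delta, 0 < kappa &
    forall x : 'rV[R]_n, dir_ball eps delta u (x - xb) ->
      (((enorm (x - xb)) `^ (gamma - 1))%:E * edist x [set x' | Phi x' yb] <=
        kappa%:E * edist yb (Phi x))%E].

(* graph of Phi closed locally around (xb,yb): its intersection with some
   closed ball around (xb,yb) is (sequentially) closed *)
Definition gph_locally_closed (n m : nat) (Phi : 'rV[R]_n -> set 'rV[R]_m)
  (xb : 'rV[R]_n) (yb : 'rV[R]_m) : Prop :=
  exists r : R, 0 < r /\
    forall (zk : nat -> 'rV[R]_n * 'rV[R]_m) (z : 'rV[R]_n * 'rV[R]_m),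
      (forall k, gph Phi (zk k) /\ enormp ((zk k).1 - xb, (zk k).2 - yb) <= r) ->
      (forall e : R, 0 < e -> exists N : nat, forall k : nat, (N <= k)%N ->
          enormp ((zk k).1 - z.1, (zk k).2 - z.2) < e) ->
      gph Phi z.

End Euclid.

From Pilot Require Import Defs.
From HB Require Import structures.
From mathcomp Require Import all_boot all_order all_algebra.
From mathcomp Require Import boolp classical_sets reals constructive_ereal ereal exp.
From mathcomp Require Import topology normedtype sequences.
From mathcomp Require Import lra ring.
Set Implicit Arguments. Unset Strict Implicit. Unset Printing Implicit Defensive.
Import Order.TTheory GRing.Theory Num.Theory.
Import numFieldNormedType.Exports.
Local Open Scope classical_set_scope.
Local Open Scope ring_scope.

(* If the estimate fails, then for every k there are a point x close
   to xb in direction u (with tolerances of order 1/k), D = dist(x, Phi^-1(yb)) > 0 and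
   y in Phi(x) with k^3 |y - yb| < |x - xb|^(gamma-1) D.  Minimizing the penalty
   |y' - yb| + beta |x' - x|^2, with beta = k^2 |y - yb| / D^2, over the (compact) part of
   the graph in a closed ball around (xb, yb) gives a minimizer (xt, yt) with yt <> yb and
   |xt - x| <= D/k; Fermat's rule makes (-2 beta (xt - x), -(yt - yb)/|yt - yb|) a regular
   normal to the graph at (xt, yt).  Rescaled by |xt - xb|^(1-gamma), the x-part tends to 0,
   while the unit vectors (yt - yb)/|yt - yb| have a nonzero cluster point, which lies in
   the kernel of the pseudo-coderivative in direction (u, 0). *)

Section Euclidean.
Variable R : realType.
Implicit Types n : nat.

Lemma dotvC n (a b : 'rV[R]_n) : dotv a b = dotv b a.
Proof. by apply: eq_bigr => i _; rewrite mulrC. Qed.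

Lemma dotvDl n (a b c : 'rV[R]_n) : dotv (a + b) c = dotv a c + dotv b c.
Proof. by rewrite /dotv -big_split; apply: eq_bigr => i _; rewrite mxE mulrDl. Qed.

Lemma dotvZl n k (a b : 'rV[R]_n) : dotv (k *: a) b = k * dotv a b.
Proof. by rewrite /dotv mulr_sumr; apply: eq_bigr => i _; rewrite mxE mulrA. Qed.

Lemma dotvNl n (a b : 'rV[R]_n) : dotv (- a) b = - dotv a b.
Proof. by rewrite -scaleN1r dotvZl mulN1r. Qed.

Lemma dotvBl n (a b c : 'rV[R]_n) : dotv (a - b) c = dotv a c - dotv b c.
Proof. by rewrite dotvDl dotvNl. Qed.

Lemma dotvDr n (a b c : 'rV[R]_n) : dotv a (b + c) = dotv a b + dotv a c.
Proof. by rewrite dotvC dotvDl !(dotvC a). Qed.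

Lemma dotvZr n k (a b : 'rV[R]_n) : dotv a (k *: b) = k * dotv a b.
Proof. by rewrite dotvC dotvZl dotvC. Qed.

Lemma dotvBr n (a b c : 'rV[R]_n) : dotv a (b - c) = dotv a b - dotv a c.
Proof. by rewrite !(dotvC a) dotvBl. Qed.

Lemma dotv0r n (a : 'rV[R]_n) : dotv a 0 = 0.
Proof. by rewrite /dotv big1 // => i _; rewrite mxE mulr0. Qed.

Lemma dotv_ge0 n (a : 'rV[R]_n) : 0 <= dotv a a.
Proof. by rewrite sumr_ge0 // => i _; rewrite -expr2 sqr_ge0. Qed.

Lemma dotv_eq0 n (a : 'rV[R]_n) : (dotv a a == 0) = (a == 0).
Proof.
apply/idP/eqP => [|->]; last by rewrite dotv0r.
rewrite psumr_eq0 => [/allP a0|i _]; last by rewrite -expr2 sqr_ge0.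
apply/rowP => i; rewrite mxE.
by have := a0 i (mem_index_enum i); rewrite mulf_eq0 orbb => /eqP.
Qed.

Lemma dotv_sqr_le n (a b : 'rV[R]_n) : dotv a b ^+ 2 <= dotv a a * dotv b b.
Proof.
have [->|b0] := eqVneq b 0; first by rewrite !dotv0r expr0n mulr0.
set A := dotv a a; set B := dotv b b; set C := dotv a b.
have B0 : 0 < B by rewrite lt_neqAle dotv_ge0 andbT eq_sym dotv_eq0.
have := dotv_ge0 (B *: a - C *: b).
rewrite !(dotvBl, dotvBr, dotvZl, dotvZr) (dotvC b a) -/A -/B -/C => h.
have : 0 <= B * (A * B - C ^+ 2) by lra.
by rewrite pmulr_rge0 // subr_ge0.
Qed.

Lemma enorm_ge0 n (a : 'rV[R]_n) : 0 <= enorm a.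
Proof. exact: sqrtr_ge0. Qed.

Lemma enorm_sqr n (a : 'rV[R]_n) : enorm a ^+ 2 = dotv a a.
Proof. by rewrite sqr_sqrtr // dotv_ge0. Qed.

Lemma enorm0 n : enorm (0 : 'rV[R]_n) = 0.
Proof. by rewrite /enorm dotv0r sqrtr0. Qed.

Lemma enorm_eq0 n (a : 'rV[R]_n) : (enorm a == 0) = (a == 0).
Proof. by rewrite -sqrf_eq0 enorm_sqr dotv_eq0. Qed.

Lemma enorm_gt0 n (a : 'rV[R]_n) : (0 < enorm a) = (a != 0).
Proof. by rewrite lt_neqAle enorm_ge0 andbT eq_sym enorm_eq0. Qed.

Lemma enormZ n k (a : 'rV[R]_n) : enorm (k *: a) = `|k| * enorm a.
Proof.
by rewrite /enorm dotvZl dotvZr mulrA sqrtrM ?sqr_ge0 // -expr2 sqrtr_sqr.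
Qed.

Lemma enormN n (a : 'rV[R]_n) : enorm (- a) = enorm a.
Proof. by rewrite -scaleN1r enormZ normrN1 mul1r. Qed.

Lemma enorm_distC n (a b : 'rV[R]_n) : enorm (a - b) = enorm (b - a).
Proof. by rewrite -enormN opprB. Qed.

Lemma enorm_sqrD n (a b : 'rV[R]_n) :
  enorm (a + b) ^+ 2 = enorm a ^+ 2 + 2 * dotv a b + enorm b ^+ 2.
Proof. by rewrite !enorm_sqr dotvDl !dotvDr (dotvC b a); ring. Qed.

Lemma dotv_le_enorm n (a b : 'rV[R]_n) : dotv a b <= enorm a * enorm b.
Proof.
have [ab0|ab0] := lerP (dotv a b) 0.
  by rewrite (le_trans ab0) // mulr_ge0 ?enorm_ge0.
rewrite -ler_sqr ?nnegrE ?mulr_ge0 ?enorm_ge0 ?(ltW ab0) // exprMn !enorm_sqr.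
exact: dotv_sqr_le.
Qed.

Lemma enormD n (a b : 'rV[R]_n) : enorm (a + b) <= enorm a + enorm b.
Proof.
rewrite -ler_sqr ?nnegrE ?addr_ge0 ?enorm_ge0 // enorm_sqrD sqrrD.
have := dotv_le_enorm a b; lra.
Qed.

Lemma enorm_distD n (a b c : 'rV[R]_n) : enorm (a - c) <= enorm (a - b) + enorm (b - c).
Proof. by rewrite (le_trans _ (enormD _ _)) // addrA subrK. Qed.

Lemma enormD_le_expansion n (a b : 'rV[R]_n) : a != 0 ->
  enorm (a + b) <= enorm a + dotv a b / enorm a + enorm b ^+ 2 / enorm a.
Proof.
rewrite -enorm_gt0 => a0.
have -> : enorm a + dotv a b / enorm a + enorm b ^+ 2 / enorm a =
    (enorm a ^+ 2 + dotv a b + enorm b ^+ 2) / enorm a by field; rewrite gt_eqF.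
rewrite ler_pdivlMr //.
have := enorm_sqrD a b; have := sqr_ge0 (enorm (a + b) - enorm a); nra.
Qed.

Lemma enorm_normalize_dist n (p q : 'rV[R]_n) : p != 0 -> q != 0 ->
  enorm ((enorm q)^-1 *: q - (enorm p)^-1 *: p) <= 2 * enorm (q - p) / enorm p.
Proof.
rewrite -!enorm_gt0 => p0 q0.
have -> : (enorm q)^-1 *: q - (enorm p)^-1 *: p =
    (enorm p)^-1 *: (q - p) + ((enorm q)^-1 - (enorm p)^-1) *: q.
  by apply/rowP => i; rewrite !mxE; ring.
rewrite (le_trans (enormD _ _)) // !enormZ ger0_norm ?invr_ge0 ?enorm_ge0 //.
have -> : `|(enorm q)^-1 - (enorm p)^-1| * enorm q = `|enorm p - enorm q| / enorm p.
  rewrite -[X in _ * X](ger0_norm (ltW q0)) -normrM -[X in _ = _ / X](ger0_norm (ltW p0)).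
  by rewrite -normfV -normrM; congr `|_|; field; rewrite !gt_eqF.
have : `|enorm p - enorm q| <= enorm (q - p).
  rewrite ler_norml; have := enorm_distD p q 0; have := enorm_distD q p 0.
  by rewrite !subr0 (enorm_distC p q) => ? ?; apply/andP; split; lra.
by rewrite [_^-1 * _]mulrC -mulrDl ler_pM2r ?invr_gt0 //; lra.
Qed.

Lemma enorm_direction_le n (u p q : 'rV[R]_n) (k : R) : p != 0 -> q != 0 -> 0 < k ->
  enorm (q - p) <= enorm p / k -> enorm (enorm p *: u - p) <= enorm p / k ->
  enorm ((enorm q)^-1 *: q - u) <= 3 / k.
Proof.
move=> p0 q0 k0 qp pu; have p0' : 0 < enorm p by rewrite enorm_gt0.
have -> : (enorm q)^-1 *: q - u =
    ((enorm q)^-1 *: q - (enorm p)^-1 *: p) - (enorm p)^-1 *: (enorm p *: u - p).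
  by apply/rowP => i; rewrite !mxE; field; rewrite !gt_eqF ?enorm_gt0.
apply: le_trans (enorm_distD _ 0 _) _; rewrite subr0 sub0r enormN enormZ.
rewrite ger0_norm ?invr_ge0 ?enorm_ge0 //.
have h1 := enorm_normalize_dist p0 q0.
have h2 : 2 * enorm (q - p) / enorm p <= 2 / k.
  by rewrite ler_pdivrMr // -mulrA ler_pM2l // mulrC.
have h3 : (enorm p)^-1 * enorm (enorm p *: u - p) <= k^-1.
  by rewrite mulrC ler_pdivrMr // mulrC.
have -> : 3 / k = 2 / k + k^-1 by field; rewrite gt_eqF.
exact: lerD (le_trans h1 h2) h3.
Qed.

Lemma enorm_coord_le n (a : 'rV[R]_n) i : `|a 0 i| <= enorm a.
Proof.
rewrite -ler_sqr ?nnegrE ?enorm_ge0 // enorm_sqr real_normK ?num_real //.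
by rewrite /dotv (bigD1 i) //= expr2 lerDl sumr_ge0 // => j _; rewrite -expr2 sqr_ge0.
Qed.

Lemma enorm_le_coord n (a : 'rV[R]_n) c : 0 <= c ->
  (forall i, `|a 0 i| <= c) -> enorm a <= Num.sqrt n%:R * c.
Proof.
move=> c0 a_le; rewrite -(ger0_norm c0) -sqrtr_sqr -sqrtrM ?ler0n // ler_wsqrtr //.
rewrite /dotv (@le_trans _ _ (\sum_(i < n) c ^+ 2)) //; last first.
  by rewrite sumr_const card_ord mulr_natl.
apply: ler_sum => i _; rewrite -expr2 -real_normK ?num_real //.
by rewrite lerXn2r ?nnegrE ?(le_trans _ (a_le i)).
Qed.

End Euclidean.

Section ProductNorm.
Variable R : realType.
Implicit Types n m : nat.

Lemma enormp_row_mx n m (a : 'rV[R]_n) (b : 'rV[R]_m) : enormp (a, b) = enorm (row_mx a b).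
Proof.
rewrite /enormp /enorm /dotv big_split_ord /=; congr (Num.sqrt (_ + _)).
  by apply: eq_bigr => i _; rewrite row_mxEl.
by apply: eq_bigr => i _; rewrite row_mxEr.
Qed.

Lemma enormp_sqr n m (a : 'rV[R]_n) (b : 'rV[R]_m) :
  enormp (a, b) ^+ 2 = enorm a ^+ 2 + enorm b ^+ 2.
Proof. by rewrite sqr_sqrtr ?addr_ge0 ?dotv_ge0 // !enorm_sqr. Qed.

Lemma enormp_ge0 n m (a : 'rV[R]_n) (b : 'rV[R]_m) : 0 <= enormp (a, b).
Proof. exact: sqrtr_ge0. Qed.

Lemma enorm_le_enormpl n m (a : 'rV[R]_n) (b : 'rV[R]_m) : enorm a <= enormp (a, b).
Proof. by rewrite -ler_sqr ?nnegrE ?enorm_ge0 ?enormp_ge0 // enormp_sqr lerDl sqr_ge0. Qed.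

Lemma enorm_le_enormpr n m (a : 'rV[R]_n) (b : 'rV[R]_m) : enorm b <= enormp (a, b).
Proof. by rewrite -ler_sqr ?nnegrE ?enorm_ge0 ?enormp_ge0 // enormp_sqr lerDr sqr_ge0. Qed.

Lemma enormp_le_add n m (a : 'rV[R]_n) (b : 'rV[R]_m) : enormp (a, b) <= enorm a + enorm b.
Proof.
rewrite -ler_sqr ?nnegrE ?addr_ge0 ?enorm_ge0 ?enormp_ge0 // enormp_sqr sqrrD.
have := mulr_ge0 (enorm_ge0 a) (enorm_ge0 b); lra.
Qed.

Definition pdist n m (z c : 'rV[R]_n * 'rV[R]_m) : R := enormp (z.1 - c.1, z.2 - c.2).

Lemma pdist_ge0 n m (z c : 'rV[R]_n * 'rV[R]_m) : 0 <= pdist z c.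
Proof. exact: enormp_ge0. Qed.

Lemma pdistC n m (z c : 'rV[R]_n * 'rV[R]_m) : pdist z c = pdist c z.
Proof. by rewrite /pdist !enormp_row_mx -enormN opp_row_mx !opprB. Qed.

Lemma pdist_triangle n m (z w c : 'rV[R]_n * 'rV[R]_m) : pdist z c <= pdist z w + pdist w c.
Proof.
rewrite /pdist !enormp_row_mx (le_trans _ (enormD _ _)) //.
by rewrite add_row_mx !addrA !subrK.
Qed.

Definition pcvg n m (zk : nat -> 'rV[R]_n * 'rV[R]_m) (z : 'rV[R]_n * 'rV[R]_m) : Prop :=
  forall e : R, 0 < e -> exists N : nat, forall k : nat, (N <= k)%N -> pdist (zk k) z < e.

Definition closed_in_ball n m (G : set ('rV[R]_n * 'rV[R]_m)) (c : 'rV[R]_n * 'rV[R]_m)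
    (r : R) : Prop :=
  forall (zk : nat -> 'rV[R]_n * 'rV[R]_m) (z : 'rV[R]_n * 'rV[R]_m),
    (forall k, G (zk k) /\ pdist (zk k) c <= r) -> pcvg zk z -> G z.

End ProductNorm.

Section Sequences.
Variable R : realType.
Implicit Types n m : nat.

Lemma increasing_seq_geq (f : nat -> nat) : increasing_seq f -> forall k, (k <= f k)%N.
Proof.
move=> /increasing_seqP f_incr; elim=> [//|k IH]; exact: leq_ltn_trans IH (f_incr k).
Qed.

Lemma increasing_seq_comp (f g : nat -> nat) :
  increasing_seq f -> increasing_seq g -> increasing_seq (f \o g).
Proof. by move=> f_incr g_incr i j /=; rewrite f_incr; exact: g_incr. Qed.

Lemma rcvg_subseq (a : nat -> R) l f : increasing_seq f -> rcvg a l -> rcvg (a \o f) l.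
Proof.
move=> f_incr a_cvg e e0; have [N HN] := a_cvg e e0; exists N => k Nk.
exact/HN/(leq_trans Nk)/increasing_seq_geq.
Qed.

Lemma vcvg_subseq n (a : nat -> 'rV[R]_n) l f : increasing_seq f -> vcvg a l -> vcvg (a \o f) l.
Proof.
move=> f_incr a_cvg e e0; have [N HN] := a_cvg e e0; exists N => k Nk.
exact/HN/(leq_trans Nk)/increasing_seq_geq.
Qed.

Lemma eventually_div_lt (c e : R) : 0 < e ->
  exists N : nat, forall k, (N <= k)%N -> c / k.+1%:R < e.
Proof.
move=> e0; exists (Num.Def.archi_bound (`|c| / e)) => k Nk.
have /archi_boundP ce : 0 <= `|c| / e by exact: divr_ge0 (normr_ge0 c) (ltW e0).
rewrite ltr_pdivrMr ?ltr0Sn // (le_lt_trans (ler_norm c)) // -ltr_pdivrMl //.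
by rewrite mulrC (lt_le_trans ce) // ler_nat ltnW.
Qed.

Lemma rcvg_le_div (a : nat -> R) l c : (forall k, `|a k - l| <= c / k.+2%:R) -> rcvg a l.
Proof.
move=> a_le e e0; have [N HN] := eventually_div_lt c e0; exists N => k Nk.
exact: le_lt_trans (a_le k) (HN k.+1 (leqW Nk)).
Qed.

Lemma vcvg_le_div n (a : nat -> 'rV[R]_n) l c :
  (forall k, enorm (a k - l) <= c / k.+2%:R) -> vcvg a l.
Proof.
move=> a_le e e0; have [N HN] := eventually_div_lt c e0; exists N => k Nk.
exact: le_lt_trans (a_le k) (HN k.+1 (leqW Nk)).
Qed.

Lemma vcvg_coord n (a : nat -> 'rV[R]_n) (l : 'rV[R]_n) :
  (forall i, rcvg (fun k => a k 0 i) (l 0 i)) -> vcvg a l.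
Proof.
move=> a_cvg e e0; set c := e / (Num.sqrt n%:R + 1).
have sqrt_ge0 : 0 <= Num.sqrt (n%:R : R) by apply: sqrtr_ge0.
have c0 : 0 < c by rewrite divr_gt0 // ltr_pwDr.
have [N HN] := boolp.choice (fun i => a_cvg i c c0).
exists (\max_i N i)%N => k Nk.
apply: (@le_lt_trans _ _ (Num.sqrt n%:R * c)).
  apply: enorm_le_coord => [|i]; first exact: ltW.
  by rewrite !mxE ltW // HN // (leq_trans _ Nk) // (leq_bigmax i).
by rewrite /c mulrA ltr_pdivrMr ?ltr_pwDr //; nra.
Qed.

Lemma bounded_rcvg_subseq (a : nat -> R) (M : R) : (forall k, `|a k| <= M) ->
  exists f l, increasing_seq f /\ rcvg (a \o f) l.
Proof.
move=> a_le; have [|f f_incr a_cvg] := @bolzano_weierstrass R a.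
  exists M; split; first exact: num_real.
  by move=> M' M'M k _; exact: le_trans (a_le k) (ltW M'M).
exists f, (lim ((a \o f) k @[k --> \oo])); split => // e e0.
have [N _ HN] := (cvgrPdist_lt _ _).1 a_cvg e e0.
by exists N => k Nk; rewrite distrC; exact: HN.
Qed.

Lemma bounded_vcvg_subseq n (a : nat -> 'rV[R]_n) (M : R) : (forall k, enorm (a k) <= M) ->
  exists f l, increasing_seq f /\ vcvg (a \o f) l.
Proof.
move=> a_le.
suff [f [l [f_incr a_cvg]]] : exists f (l : 'rV[R]_n), increasing_seq f /\
    forall i : 'I_n, rcvg (fun k => a (f k) 0 i) (l 0 i).
  by exists f, l; split => //; exact: vcvg_coord.
suff /(_ n) [f [l [f_incr a_cvg]]] : forall j, exists f (l : 'rV[R]_n), increasing_seq f /\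
    forall i : 'I_n, (i < j)%N -> rcvg (fun k => a (f k) 0 i) (l 0 i).
  by exists f, l; split => // i; exact: a_cvg.
elim=> [|j [f [l [f_incr a_cvg]]]]; first by exists id, 0.
have [jn|nj] := ltnP j n; last first.
  by exists f, l; split => // i ij; apply: a_cvg; exact: leq_trans (ltn_ord i) nj.
pose j' : 'I_n := Ordinal jn.
have [g [c [g_incr aj_cvg]]] := @bounded_rcvg_subseq (fun k => a (f k) 0 j') M
  (fun k => le_trans (enorm_coord_le _ _) (a_le (f k))).
exists (f \o g), (\row_i (if i == j' then c else l 0 i)).
split => [|i]; first exact: increasing_seq_comp.
rewrite ltnS leq_eqVlt mxE => /orP[/eqP ij|ij].
  have -> : i = j' by apply: val_inj; exact: ij.
  by rewrite eqxx.
have -> : (i == j') = false by apply/negbTE/eqP => ij'; move: ij; rewrite ij' /= ltnn.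
exact: rcvg_subseq (a_cvg i ij).
Qed.

Lemma vcvg_unit_neq0 n (b : nat -> 'rV[R]_n) l :
  (forall k, enorm (b k) = 1) -> vcvg b l -> l != 0.
Proof.
move=> b1 b_cvg; apply/eqP => l0; have [N HN] := b_cvg 1 ltr01.
by have := HN N (leqnn N); rewrite l0 subr0 b1 ltxx.
Qed.

Lemma pcvg_of_vcvg n m (zk : nat -> 'rV[R]_n * 'rV[R]_m) z :
  vcvg (fun k => (zk k).1) z.1 -> vcvg (fun k => (zk k).2) z.2 -> pcvg zk z.
Proof.
move=> cvg1 cvg2 e e0; have e2 : 0 < e / 2 by rewrite divr_gt0.
have [N1 HN1] := cvg1 _ e2; have [N2 HN2] := cvg2 _ e2.
exists (maxn N1 N2) => k; rewrite geq_max => /andP[k1 k2].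
apply: le_lt_trans (enormp_le_add _ _) _.
by have := HN1 k k1; have := HN2 k k2; lra.
Qed.

Lemma pcvg_pdist_le n m (zk : nat -> 'rV[R]_n * 'rV[R]_m) z c r :
  pcvg zk z -> (forall k, pdist (zk k) c <= r) -> pdist z c <= r.
Proof.
move=> zk_cvg zk_le; apply/ler_addgt0Pr => e e0; have [N HN] := zk_cvg e e0.
rewrite (le_trans (pdist_triangle _ (zk N) _)) // addrC [pdist z _]pdistC.
by apply: lerD; [exact: zk_le | exact/ltW/HN].
Qed.

Lemma bounded_pcvg_subseq n m (zs : nat -> 'rV[R]_n * 'rV[R]_m) c r :
  (forall k, pdist (zs k) c <= r) -> exists f z, increasing_seq f /\ pcvg (zs \o f) z.
Proof.
move=> zs_le.
have b1 k : enorm (zs k).1 <= r + enorm c.1.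
  have := enorm_distD (zs k).1 c.1 0; rewrite !subr0 => /le_trans; apply.
  by rewrite lerD2r (le_trans (enorm_le_enormpl _ _) (zs_le k)).
have b2 k : enorm (zs k).2 <= r + enorm c.2.
  have := enorm_distD (zs k).2 c.2 0; rewrite !subr0 => /le_trans; apply.
  by rewrite lerD2r (le_trans (enorm_le_enormpr _ _) (zs_le k)).
have [f [l1 [f_incr cvg1]]] := bounded_vcvg_subseq b1.
have [g [l2 [g_incr cvg2]]] := bounded_vcvg_subseq (fun k => b2 (f k)).
exists (f \o g), (l1, l2); split; first exact: increasing_seq_comp.
by apply: pcvg_of_vcvg; [exact: vcvg_subseq g_incr cvg1 | exact: cvg2].
Qed.

End Sequences.

Section Minimizer.
Variable R : realType.
Variables (n m : nat) (G : set ('rV[R]_n * 'rV[R]_m)) (c : 'rV[R]_n * 'rV[R]_m) (r : R).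
Hypothesis G_closed : closed_in_ball G c r.

Lemma exists_minimizer (phi : 'rV[R]_n * 'rV[R]_m -> R) (L : R) :
  (exists2 z0, G z0 & pdist z0 c <= r) -> (forall z, 0 <= phi z) -> 0 <= L ->
  (forall z z', pdist z c <= r -> pdist z' c <= r -> phi z <= phi z' + L * pdist z z') ->
  exists2 z, G z /\ pdist z c <= r & forall z', G z' -> pdist z' c <= r -> phi z <= phi z'.
Proof.
move=> [z0 Gz0 z0_le] phi_ge0 L0 phi_lip.
pose S := [set phi z | z in [set z | G z /\ pdist z c <= r]].
have S_lb : has_lbound S by exists 0 => _ [z _ <-].
have S_inf : has_inf S by split => //; exists (phi z0), z0.
have /boolp.choice [zs zs_min] : forall j : nat, exists z,
    [/\ G z, pdist z c <= r & phi z < inf S + j.+1%:R^-1].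
  move=> j; have j0 : 0 < j.+1%:R^-1 :> R by rewrite invr_gt0 ltr0Sn.
  have [_ [z [Gz z_le] <-] ?] := inf_adherent j0 S_inf.
  by exists z.
have zs_le k : pdist (zs k) c <= r by case: (zs_min k).
have [f [z [f_incr zs_cvg]]] := bounded_pcvg_subseq zs_le.
have Gz : G z by apply: G_closed zs_cvg => k; case: (zs_min (f k)).
exists z; first by split => //; exact: pcvg_pdist_le zs_cvg (fun k => zs_le (f k)).
move=> z' Gz' z'_le; apply/ler_addgt0Pr => e e0.
have inf_le : inf S <= phi z' by apply: ge_inf => //; exists z'.
have e2 : 0 < e / 2 by rewrite divr_gt0.
have eL : 0 < e / (2 * (L + 1)) by rewrite divr_gt0 // mulr_gt0 // ltr_wpDl.
have [N1 HN1] := eventually_div_lt 1 e2; have [N2 HN2] := zs_cvg _ eL.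
pose k := maxn N1 N2.
have [_ zk_le phi_zk] := zs_min (f k).
have phi_lt : phi (zs (f k)) < inf S + e / 2.
  rewrite (lt_trans phi_zk) // ltrD2l -div1r HN1 //.
  by rewrite (leq_trans (leq_maxl N1 N2)) // increasing_seq_geq.
have lip_le : L * pdist z (zs (f k)) <= e / 2.
  rewrite pdistC (le_trans (ler_wpM2l L0 (ltW (HN2 k (leq_maxr N1 N2))))) //.
  have -> : L * (e / (2 * (L + 1))) = e / 2 * (L / (L + 1)).
    by field; rewrite gt_eqF // ltr_wpDl.
  by apply: ler_piMr; [exact: ltW | rewrite ler_pdivrMr ?ltr_wpDl //; lra].
have := phi_lip z (zs (f k)) (pcvg_pdist_le zs_cvg (fun k => zs_le (f k))) zk_le.
lra.
Qed.

End Minimizer.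

Section RegularNormal.
Variable R : realType.
Variables (n m : nat) (Om : set ('rV[R]_n * 'rV[R]_m)) (z : 'rV[R]_n * 'rV[R]_m).

Lemma reg_normal_of_quadratic_bound (zeta : 'rV[R]_n * 'rV[R]_m) (M d : R) :
  Om z -> 0 < d ->
  (forall z', Om z' -> pdist z' z < d ->
     dotp zeta (z'.1 - z.1, z'.2 - z.2) <= M * pdist z' z ^+ 2) ->
  reg_normal Om z zeta.
Proof.
move=> Omz d0 zeta_le; split => // e e0.
have M1 : 0 < `|M| + 1 by rewrite ltr_wpDl.
exists (Num.min d (e / (`|M| + 1))); split => [|z' Omz'].
  by rewrite lt_min d0 divr_gt0.
rewrite lt_min => /andP[z'd z'e]; rewrite (le_trans (zeta_le z' Omz' z'd)) //.
rewrite -[enormp _]/(pdist z' z); move: z'e; rewrite ltr_pdivlMr // => z'e.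
have h1 : 0 <= (`|M| - M) * pdist z' z ^+ 2 by rewrite mulr_ge0 ?sqr_ge0 // subr_ge0 ler_norm.
have h2 : 0 <= (e - pdist z' z * (`|M| + 1)) * pdist z' z.
  by rewrite mulr_ge0 ?pdist_ge0 // subr_ge0 ltW.
nra.
Qed.

Lemma reg_normalZ (a : 'rV[R]_n) (b : 'rV[R]_m) (k : R) :
  0 < k -> reg_normal Om z (a, b) -> reg_normal Om z (k *: a, k *: b).
Proof.
move=> k0 [Omz ab_normal]; split => // e e0.
have [d [d0 hd]] := ab_normal (e / k) (divr_gt0 e0 k0).
exists d; split => // z' Omz' z'd; move: (hd z' Omz' z'd).
rewrite /dotp /= !dotvZl -mulrDr => ab_le.
have -> : e * enormp (z'.1 - z.1, z'.2 - z.2) =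
    k * (e / k * enormp (z'.1 - z.1, z'.2 - z.2)) by field; rewrite gt_eqF.
by rewrite ler_pM2l.
Qed.

End RegularNormal.

Section Penalty.
Variable R : realType.
Variables (n m : nat) (Phi : 'rV[R]_n -> set 'rV[R]_m) (xb : 'rV[R]_n) (yb : 'rV[R]_m).
Variables (r beta : R) (x : 'rV[R]_n).
Hypothesis beta_ge0 : 0 <= beta.

Definition penalty (z : 'rV[R]_n * 'rV[R]_m) : R :=
  enorm (z.2 - yb) + beta * enorm (z.1 - x) ^+ 2.

Lemma penalty_ge0 z : 0 <= penalty z.
Proof. by rewrite addr_ge0 ?enorm_ge0 // mulr_ge0 ?sqr_ge0. Qed.

Lemma penalty_lipschitz z z' : pdist z (xb, yb) <= r -> pdist z' (xb, yb) <= r ->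
  penalty z <= penalty z' + (1 + beta * (2 * (r + enorm (x - xb)))) * pdist z z'.
Proof.
move=> z_le z'_le; rewrite /penalty.
have a_le (w : 'rV[R]_n * 'rV[R]_m) :
    pdist w (xb, yb) <= r -> enorm (w.1 - x) <= r + enorm (x - xb).
  move=> w_le; rewrite (le_trans (enorm_distD _ xb _)) // (enorm_distC xb x) lerD2r.
  exact: le_trans (enorm_le_enormpl _ _) w_le.
have az := a_le _ z_le; have az' := a_le _ z'_le.
have tri1 := enorm_distD z.1 z'.1 x; have tri2 := enorm_distD z'.1 z.1 x.
have tri3 := enorm_distD z.2 z'.2 yb; rewrite (enorm_distC z'.1 z.1) in tri2.
have d_le := enorm_le_enormpl (z.1 - z'.1) (z.2 - z'.2).
have e_le := enorm_le_enormpr (z.1 - z'.1) (z.2 - z'.2).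
have a0 := enorm_ge0 (z.1 - x); have a0' := enorm_ge0 (z'.1 - x).
rewrite -/(pdist z z') in d_le e_le.
set a := enorm (z.1 - x) in az tri1 tri2 a0 *; set a' := enorm (z'.1 - x) in az' tri1 tri2 a0' *.
set d := enorm (z.1 - z'.1) in tri1 tri2 d_le; set P := pdist z z' in d_le e_le *.
set rt := r + enorm (x - xb) in az az' *.
have sq : a ^+ 2 <= a' ^+ 2 + P * (2 * rt).
  have h1 : (a - a') * (a + a') <= d * (a + a') by apply: ler_wpM2r; lra.
  have h2 : d * (a + a') <= P * (2 * rt) by apply: ler_pM; lra.
  nra.
have := ler_wpM2l beta_ge0 sq; lra.
Qed.

Hypothesis gph_closed : closed_in_ball (gph Phi) (xb, yb) r.

Lemma exists_penalty_minimizer y : Phi x y -> pdist (x, y) (xb, yb) <= r ->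
  exists2 zt, gph Phi zt /\ pdist zt (xb, yb) <= r &
    forall z', gph Phi z' -> pdist z' (xb, yb) <= r -> penalty zt <= penalty z'.
Proof.
move=> Pxy xy_le; apply: exists_minimizer penalty_lipschitz => //; first by exists (x, y).
- exact: penalty_ge0.
- rewrite addr_ge0 // mulr_ge0 // mulr_ge0 // addr_ge0 ?enorm_ge0 //.
  exact: le_trans (pdist_ge0 _ _) xy_le.
Qed.

Lemma reg_normal_at_penalty_minimizer zt :
  gph Phi zt -> pdist zt (xb, yb) < r -> zt.2 != yb ->
  (forall z', gph Phi z' -> pdist z' (xb, yb) <= r -> penalty zt <= penalty z') ->
  reg_normal (gph Phi) zt (- (2 * beta) *: (zt.1 - x), - (enorm (zt.2 - yb))^-1 *: (zt.2 - yb)).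
Proof.
move=> Gzt zt_lt zt_neq zt_min.
have N0 : 0 < enorm (zt.2 - yb) by rewrite enorm_gt0 subr_eq0.
apply: (@reg_normal_of_quadratic_bound _ _ _ _ _ _ (beta + (enorm (zt.2 - yb))^-1)
  (r - pdist zt (xb, yb))) => // [|z' Gz' z'_lt]; first by rewrite subr_gt0.
have z'_le : pdist z' (xb, yb) <= r.
  by have := pdist_triangle z' zt (xb, yb); lra.
have := zt_min z' Gz' z'_le; rewrite /penalty.
have -> : z'.2 - yb = (zt.2 - yb) + (z'.2 - zt.2) by rewrite [RHS]addrC addrA subrK.
have -> : z'.1 - x = (zt.1 - x) + (z'.1 - zt.1) by rewrite [RHS]addrC addrA subrK.
rewrite (enorm_sqrD (zt.1 - x)) /pdist enormp_sqr /dotp /= !dotvZl.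
have yt_neq : zt.2 - yb != 0 by rewrite subr_eq0.
have := enormD_le_expansion (z'.2 - zt.2) yt_neq.
have := mulr_ge0 beta_ge0 (sqr_ge0 (enorm (z'.2 - zt.2))).
have iN0 : 0 <= (enorm (zt.2 - yb))^-1 by rewrite invr_ge0 ltW.
have := mulr_ge0 iN0 (sqr_ge0 (enorm (z'.1 - zt.1))).
lra.
Qed.

End Penalty.

Section PointSetDistance.
Variable R : realType.
Variables (n : nat) (x : 'rV[R]_n) (S : set 'rV[R]_n).

Lemma edist_set_ge (a : R) :
  (forall y, S y -> a <= enorm (x - y)) -> (a%:E <= Defs.edist x S)%E.
Proof. by move=> a_le; apply/ereal_infP => _ [y Sy <-]; rewrite lee_fin a_le. Qed.

Lemma edist_set_fin y0 : S y0 -> exists D : R, [/\ Defs.edist x S = D%:E, 0 <= D,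
  D <= enorm (x - y0) & forall y, S y -> D <= enorm (x - y)].
Proof.
move=> Sy0; have ge0 : (0%:E <= Defs.edist x S)%E by apply: edist_set_ge => y _; exact: enorm_ge0.
have le_y y : S y -> (Defs.edist x S <= (enorm (x - y))%:E)%E.
  by move=> Sy; apply: ge_ereal_inf; exists (enorm (x - y))%:E => //; exists y.
have := le_y y0 Sy0; move: ge0 le_y.
case: (Defs.edist x S) => [D| |] //= D0 le_y D_le.
by exists D; split => // [|y /le_y]; rewrite -lee_fin.
Qed.

End PointSetDistance.

Section ApproximateNormals.
Variable R : realType.
Variables (n m : nat) (Phi : 'rV[R]_n -> set 'rV[R]_m) (xb : 'rV[R]_n) (yb : 'rV[R]_m).
Variables (u : 'rV[R]_n) (gamma : R).

(* The k-th term of the sequences in the definition of the pseudo-coderivative, read off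
   from the base point [(xt, yt)]: [t_k = |xt - xb|], [u_k = (xt - xb) / t_k],
   [v_k = (yt - yb) / t_k^gamma], [x*_k = xs] and [y*_k = b]. *)
Inductive approx_normal (C : R) (k : nat)
    (xt : 'rV[R]_n) (yt : 'rV[R]_m) (xs : 'rV[R]_n) (b : 'rV[R]_m) : Prop :=
  ApproxNormal of 0 < enorm (xt - xb)
  & enorm (xt - xb) <= C / k.+2%:R
  & enorm ((enorm (xt - xb))^-1 *: (xt - xb) - u) <= C / k.+2%:R
  & enorm ((enorm (xt - xb) `^ gamma)^-1 *: (yt - yb)) <= C / k.+2%:R
  & enorm xs <= C / k.+2%:R
  & enorm b = 1
  & reg_normal (gph Phi) (xt, yt) (xs, - (enorm (xt - xb) `^ (gamma - 1))^-1 *: b).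

Lemma approx_normals_kernel (C : R) :
  (forall k, exists xt yt xs b, approx_normal C k xt yt xs b) ->
  exists2 l, l != 0 & kerM (pseudo_coderiv Phi gamma xb yb u 0) l.
Proof.
move=> approx.
have /boolp.choice [F F_approx] : forall k,
    exists p : ('rV[R]_n * 'rV[R]_m) * ('rV[R]_n * 'rV[R]_m),
      approx_normal C k p.1.1 p.1.2 p.2.1 p.2.2.
  by move=> k; have [xt [yt [xs [b ?]]]] := approx k; exists ((xt, yt), (xs, b)).
pose T k := enorm ((F k).1.1 - xb).
have b_le k : enorm (F k).2.2 <= 1 by case: (F_approx k) => _ _ _ _ _ ->.
have [f [l [f_incr b_cvg]]] := bounded_vcvg_subseq b_le.
exists l; first by apply: vcvg_unit_neq0 b_cvg => k; case: (F_approx (f k)).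
exists (fun k => (T (f k))^-1 *: ((F (f k)).1.1 - xb)),
  (fun k => (T (f k) `^ gamma)^-1 *: ((F (f k)).1.2 - yb)), (T \o f),
  (fun k => (F (f k)).2.1), (fun k => (F (f k)).2.2).
split => //.
- split.
    apply: (vcvg_subseq (a := fun k => (T k)^-1 *: ((F k).1.1 - xb)) f_incr).
    by apply: (@vcvg_le_div _ _ _ _ C) => k; case: (F_approx k).
  apply: (vcvg_subseq (a := fun k => (T k `^ gamma)^-1 *: ((F k).1.2 - yb)) f_incr).
  by apply: (@vcvg_le_div _ _ _ _ C) => k; rewrite subr0; case: (F_approx k).
- split => [k|]; first by case: (F_approx (f k)).
  apply: (rcvg_subseq (a := T) f_incr); apply: (@rcvg_le_div _ _ _ C) => k.
  by case: (F_approx k) => T0 T_le *; rewrite /T subr0 ger0_norm // ltW.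
- apply: (vcvg_subseq (a := fun k => (F k).2.1) f_incr); apply: (@vcvg_le_div _ _ _ _ C) => k.
  by rewrite subr0; case: (F_approx k).
move=> k; case: (F_approx (f k)) => T0 _ _ _ _ _; rewrite -/(T (f k)).
have -> : enorm ((T (f k))^-1 *: ((F (f k)).1.1 - xb)) = 1.
  by rewrite enormZ ger0_norm ?invr_ge0 ?(ltW T0) // mulVf ?gt_eqF.
rewrite mulr1 !scalerA !divff ?gt_eqF ?powR_gt0 // !scale1r.
by rewrite [xb + _]addrC [yb + _]addrC !subrK.
Qed.

End ApproximateNormals.

Lemma powR_ge1 (R : realType) (a p : R) : 1 <= a -> 0 <= p -> 1 <= a `^ p.
Proof. by move=> a1 p0; rewrite -[X in X <= _](powRr0 a); apply: ler_powR. Qed.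

Section FailurePoints.
Variable R : realType.
Variables (n m : nat) (Phi : 'rV[R]_n -> set 'rV[R]_m) (xb : 'rV[R]_n) (yb : 'rV[R]_m).
Variables (u : 'rV[R]_n) (gamma r : R).

(* A point where the estimate fails for [eps = min(1, r/4)/(k+2)], [delta = 1/(k+2)] and
   [kappa = (k+2)^3], with [D = dist(x, Phi^-1(yb))] and [y] in [Phi x] witnessing the failure. *)
Inductive failure_point (k : nat) (x : 'rV[R]_n) (y : 'rV[R]_m) (D : R) : Prop :=
  FailurePoint of 0 < D
  & D <= enorm (x - xb)
  & k.+2%:R * enorm (x - xb) <= 1
  & 4 * enorm (x - xb) <= r
  & enorm (enorm (x - xb) *: u - (x - xb)) <= enorm (x - xb) / k.+2%:R
  & (forall x', Phi x' yb -> D <= enorm (x - x'))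
  & Phi x y
  & k.+2%:R ^+ 3 * enorm (y - yb) < enorm (x - xb) `^ (gamma - 1) * D.

Lemma failure_point_of_not_subreg : Phi xb yb -> 0 < r -> enorm u = 1 ->
  ~ metric_pseudo_subreg Phi gamma xb yb u -> forall k, exists x y D, failure_point k x y D.
Proof.
move=> Pxb r0 u1 not_subreg k; pose kk : R := k.+2%:R.
have kk1 : 1 <= kk by rewrite ler1n.
have kk0 : 0 < kk by rewrite ltr0Sn.
set rho := Num.min 1 (r / 4).
have rho0 : 0 < rho by rewrite lt_min ltr01 divr_gt0.
have [x [x_dir x_fail]] : exists x, dir_ball (rho / kk) kk^-1 u (x - xb) /\
    ~ ((enorm (x - xb) `^ (gamma - 1))%:E * Defs.edist x [set x' | Phi x' yb] <=
       (kk ^+ 3)%:E * Defs.edist yb (Phi x))%E.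
  apply: contrapT => no_x; apply: not_subreg.
  exists (rho / kk), kk^-1, (kk ^+ 3); split; rewrite ?divr_gt0 ?invr_gt0 ?exprn_gt0 //.
  by move=> x x_dir; apply: contrapT => x_fail; apply: no_x; exists x.
move: x_dir; rewrite /dir_ball /= u1 scale1r mulr1 => -[x_dir x_rho].
set tau := enorm (x - xb) in x_dir x_rho x_fail *.
have [D [dE D0 D_tau D_min]] := edist_set_fin x (Pxb : [set x' | Phi x' yb] xb).
have [y Pxy y_lt] : exists2 y, Phi x y & kk ^+ 3 * enorm (y - yb) < tau `^ (gamma - 1) * D.
  apply: contrapT => no_y; apply: x_fail; rewrite dE -EFinM.
  have : ((tau `^ (gamma - 1) * D / kk ^+ 3)%:E <= Defs.edist yb (Phi x))%E.
    apply: edist_set_ge => y Pxy.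
    rewrite ler_pdivrMr ?exprn_gt0 // [_ * kk ^+ 3]mulrC enorm_distC.
    by rewrite leNgt; apply/negP => y_lt; apply: no_y; exists y.
  case: (Defs.edist yb (Phi x)) => [e| |] //=; rewrite ?lee_fin.
    by rewrite ler_pdivrMr ?exprn_gt0 // [e * _]mulrC.
  by move=> _; rewrite mulry gtr0_sg ?exprn_gt0 // mul1e leey.
exists x, y, D; split; rewrite -/kk -/tau //.
- rewrite lt_neqAle D0 andbT; apply/eqP => D0'; move: y_lt.
  by rewrite -D0' mulr0 ltNge mulr_ge0 ?enorm_ge0 ?exprn_ge0.
- have : rho <= 1 by rewrite ge_min lexx.
  by move: x_rho; rewrite ler_pdivlMr // mulrC; lra.
- have : rho <= r / 4 by rewrite ge_min lexx orbT.
  have : tau <= kk * tau by rewrite ler_peMl ?enorm_ge0.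
  by move: x_rho; rewrite ler_pdivlMr // mulrC; lra.
- by rewrite mulrC.
Qed.

End FailurePoints.

Section ApproximateNormalsFromFailure.
Variable R : realType.
Variables (n m : nat) (Phi : 'rV[R]_n -> set 'rV[R]_m) (xb : 'rV[R]_n) (yb : 'rV[R]_m).
Variables (u : 'rV[R]_n) (gamma r : R).
Hypothesis gamma_ge1 : 1 <= gamma.
Hypothesis gph_closed : closed_in_ball (gph Phi) (xb, yb) r.

Lemma failure_point_dist k x y D : failure_point Phi xb yb u gamma r k x y D ->
  0 < enorm (y - yb) <= enorm (x - xb).
Proof.
case=> D0 D_tau tau_kk _ _ D_min Pxy y_fail; apply/andP; split.
  rewrite enorm_gt0 subr_eq0; apply/eqP => y_yb; move: Pxy; rewrite y_yb => /D_min.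
  by rewrite subrr enorm0; lra.
set tau := enorm (x - xb) in D_tau tau_kk y_fail *.
have kk1 : 1 <= k.+2%:R :> R by rewrite ler1n.
have tau_le1 : tau <= 1.
  by rewrite (le_trans _ tau_kk) // ler_peMl ?enorm_ge0.
have pw_le1 : tau `^ (gamma - 1) <= 1.
  have : tau `^ (gamma - 1) <= 1 `^ (gamma - 1).
    by apply: ge0_ler_powR; rewrite ?subr_ge0 ?nnegrE ?enorm_ge0.
  by rewrite powR1.
have : enorm (y - yb) <= k.+2%:R ^+ 3 * enorm (y - yb).
  exact: ler_peMl (enorm_ge0 _) (exprn_ege1 3 kk1).
have : tau `^ (gamma - 1) * D <= D by exact: ler_piMl (ltW D0) pw_le1.
lra.
Qed.

Lemma failure_point_lt_scaled k x y D T : failure_point Phi xb yb u gamma r k x y D ->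
  0 <= T -> enorm (x - xb) <= 2 * T ->
  k.+2%:R ^+ 3 * enorm (y - yb) < 2 `^ (gamma - 1) * T `^ (gamma - 1) * D.
Proof.
case=> D0 _ _ _ _ _ _ y_fail T0 tau_le; apply: (lt_le_trans y_fail).
apply: ler_wpM2r; first exact: ltW.
rewrite -powRM ?ler0n //.
by apply: ge0_ler_powR; rewrite ?subr_ge0 ?nnegrE ?mulr_ge0 ?enorm_ge0.
Qed.

(* [(xt, yt)] minimizes the penalty [|y' - yb| + beta |x' - x|^2] over the graph near
   [(xb, yb)]; the choice of [beta] forces [|xt - x| <= D/(k+2)]. *)
Lemma failure_point_normal k x y D : failure_point Phi xb yb u gamma r k x y D ->
  let beta := k.+2%:R ^+ 2 * enorm (y - yb) / D ^+ 2 in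
  exists xt yt, [/\ yt != yb, enorm (xt - x) * k.+2%:R <= D,
    enorm (yt - yb) <= enorm (y - yb), enorm (xt - xb) <= 2 * enorm (x - xb)
    & enorm (x - xb) <= 2 * enorm (xt - xb)] /\
  reg_normal (gph Phi) (xt, yt)
    (- (2 * beta) *: (xt - x), - (enorm (yt - yb))^-1 *: (yt - yb)).
Proof.
move=> fp; have /andP[eta0 eta_tau] := failure_point_dist fp.
case: fp => D0 D_tau _ tau_r _ D_min Pxy _ beta.
pose kk : R := k.+2%:R; rewrite -/kk in beta *.
have kk2 : 2 <= kk by rewrite ler_nat.
set tau := enorm (x - xb) in D_tau tau_r eta_tau *.
set eta := enorm (y - yb) in eta0 eta_tau beta *.
have beta0 : 0 < beta by rewrite divr_gt0 ?mulr_gt0 ?exprn_gt0 //; lra.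
have xy_le : pdist (x, y) (xb, yb) <= r.
  by rewrite (le_trans (enormp_le_add _ _)) //= -/tau -/eta; lra.
have [[xt yt] [Gzt zt_le] zt_min] :=
  exists_penalty_minimizer (ltW beta0) gph_closed Pxy xy_le.
have := zt_min (x, y) Pxy xy_le; rewrite /penalty /= subrr enorm0 expr0n mulr0 addr0 -/eta.
set a := enorm (xt - x); set N := enorm (yt - yb) => pen_le.
have a0 : 0 <= a by exact: enorm_ge0.
have N0 : 0 <= N by exact: enorm_ge0.
have a_kk : a * kk <= D.
  have : eta * (a * kk) ^+ 2 <= eta * D ^+ 2.
    have -> : eta * (a * kk) ^+ 2 = beta * a ^+ 2 * D ^+ 2.
      by rewrite /beta mulrAC divfK ?expf_neq0 ?gt_eqF //; ring.
    by rewrite ler_wpM2r ?sqr_ge0 //; lra.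
  by rewrite ler_pM2l // ler_sqr ?nnegrE ?mulr_ge0 ?(ltW D0) //; lra.
have a_tau : a * 2 <= tau by rewrite (le_trans _ (le_trans a_kk D_tau)) // ler_wpM2l.
have T_le := enorm_distD xt x xb; have T_ge := enorm_distD x xt xb.
rewrite (enorm_distC x xt) -/a -/tau in T_le T_ge.
have yt_neq : yt != yb.
  apply/eqP => yt_yb; move: Gzt; rewrite /gph /= yt_yb => /D_min.
  rewrite enorm_distC -/a; have : a * 2 <= a * kk by rewrite ler_wpM2l.
  lra.
have N_le : N <= eta by have := mulr_ge0 (ltW beta0) (sqr_ge0 a); lra.
have zt_lt : pdist (xt, yt) (xb, yb) < r.
  by rewrite (le_lt_trans (enormp_le_add _ _)) //= -/N; lra.
exists xt, yt; split; first by split; rewrite -/a -/N //; lra.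
by have /= := reg_normal_at_penalty_minimizer (ltW beta0) Gzt zt_lt yt_neq zt_min.
Qed.

Lemma penalty_gradient_le (kk eta D a M : R) : 2 <= kk -> 0 <= eta -> 0 < D -> 0 <= a ->
  a * kk <= D -> kk ^+ 3 * eta < M * D -> 2 * (kk ^+ 2 * eta / D ^+ 2) * a * kk <= M.
Proof.
move=> kk2 eta0 D0 a0 a_kk fail; rewrite -(ler_pM2r D0); apply: le_trans (ltW fail).
have -> : 2 * (kk ^+ 2 * eta / D ^+ 2) * a * kk * D = 2 * (kk ^+ 2 * eta) * (a * kk / D).
  by field; rewrite gt_eqF.
have kk_eta : 2 * (kk ^+ 2 * eta) <= kk ^+ 3 * eta.
  by rewrite [kk ^+ 3]exprS -mulrA; apply: ler_wpM2r; rewrite // mulr_ge0 ?sqr_ge0.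
rewrite (le_trans _ kk_eta) //; apply: ler_piMr.
  by rewrite mulr_ge0 // mulr_ge0 // sqr_ge0.
by rewrite ler_pdivrMr // mul1r.
Qed.

Lemma exists_approx_normal k x y D : failure_point Phi xb yb u gamma r k x y D ->
  exists xt yt xs b, approx_normal Phi xb yb u gamma (3 * 2 `^ (gamma - 1)) k xt yt xs b.
Proof.
move=> fp; have /andP[eta0 _] := failure_point_dist fp.
have [xt [yt [[yt_neq a_kk N_le T_le T_ge] normal]]] := failure_point_normal fp.
have fail_T := failure_point_lt_scaled fp (enorm_ge0 (xt - xb)) T_ge.
case: fp => D0 D_tau tau_kk _ x_dir _ _ _.
pose kk : R := k.+2%:R; rewrite -/kk in a_kk tau_kk x_dir fail_T normal.
have kk2 : 2 <= kk by rewrite ler_nat.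
have kk0 : 0 < kk by lra.
set tau := enorm (x - xb) in D_tau tau_kk x_dir T_le T_ge.
set eta := enorm (y - yb) in eta0 N_le fail_T normal.
set a := enorm (xt - x) in a_kk; set N := enorm (yt - yb) in N_le normal.
set T := enorm (xt - xb) in T_le T_ge fail_T; set beta := kk ^+ 2 * eta / D ^+ 2 in normal.
set s := T `^ (gamma - 1) in fail_T *; set c2 := 2 `^ (gamma - 1) : R in fail_T *.
have N0 : 0 < N by rewrite enorm_gt0 subr_eq0.
have beta0 : 0 < beta by rewrite divr_gt0 ?mulr_gt0 ?exprn_gt0.
have T0 : 0 < T by lra.
have s0 : 0 < s by exact: powR_gt0.
have c2_ge1 : 1 <= c2 by apply: powR_ge1; rewrite ?ler1n ?subr_ge0.
have cs0 : 0 <= c2 * s by rewrite mulr_ge0 ?powR_ge0.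
exists xt, yt, (s^-1 *: (- (2 * beta) *: (xt - x))), (N^-1 *: (yt - yb)).
split; rewrite -/kk -/T //.
- rewrite ler_pdivlMr //; have := ler_wpM2r (ltW kk0) T_le; lra.
- have p0 : x - xb != 0 by rewrite -enorm_gt0 -/tau; lra.
  have q0 : xt - xb != 0 by rewrite -enorm_gt0.
  have qp : enorm ((xt - xb) - (x - xb)) <= tau / kk.
    by rewrite opprB addrA subrK ler_pdivlMr // -/a; lra.
  apply: le_trans (enorm_direction_le p0 q0 kk0 qp x_dir) _.
  by rewrite ler_pM2r ?invr_gt0 //; lra.
- have -> : T `^ gamma = T * s.
    by rewrite /s mulr_powRB1 ?enorm_ge0 //; exact: lt_le_trans ltr01 gamma_ge1.
  rewrite enormZ ger0_norm ?invr_ge0 ?mulr_ge0 ?enorm_ge0 ?(ltW s0) // -/N.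
  rewrite mulrC ler_pdivrMr ?mulr_gt0 // mulrAC ler_pdivlMr //.
  have : N * kk <= kk ^+ 3 * eta.
    rewrite mulrC; apply: ler_pM; rewrite ?enorm_ge0 ?(ltW kk0) //.
    by rewrite -[X in X <= _]expr1 ler_eXn2l //; lra.
  have := ler_wpM2l cs0 (le_trans D_tau T_ge); have := mulr_ge0 cs0 (ltW T0).
  lra.
- rewrite !enormZ normrN ger0_norm ?invr_ge0 ?(ltW s0) // ger0_norm; last first.
    by rewrite mulr_ge0 ?(ltW beta0).
  rewrite -/a mulrC ler_pdivrMr // [X in _ <= X]mulrAC ler_pdivlMr //.
  have := penalty_gradient_le kk2 (ltW eta0) D0 (enorm_ge0 _) a_kk fail_T.
  by rewrite -/beta -/a; lra.
- by rewrite enormZ ger0_norm ?invr_ge0 ?(ltW N0) // mulVf ?gt_eqF.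
- have s0' : 0 < s^-1 by rewrite invr_gt0.
  have -> : - (T `^ (gamma - 1))^-1 *: (N^-1 *: (yt - yb)) =
      s^-1 *: (- N^-1 *: (yt - yb)) by rewrite -/s !scaleNr scalerN.
  exact: reg_normalZ s0' normal.
Qed.

End ApproximateNormalsFromFailure.

Theorem lemma2p16 (R : realType) (n m : nat) (Phi : 'rV[R]_n -> set 'rV[R]_m)
  (xb : 'rV[R]_n) (yb : 'rV[R]_m) (u : 'rV[R]_n) (gamma : R) :
  Phi xb yb ->
  gph_locally_closed Phi xb yb ->
  enorm u = 1 ->
  1 <= gamma ->
  kerM (pseudo_coderiv Phi gamma xb yb u 0) `<=` [set 0] ->
  metric_pseudo_subreg Phi gamma xb yb u.
Proof.
move=> Pxb [r [r0 gph_closed]] u1 gamma_ge1 ker_le; apply: contrapT => not_subreg.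
have approx k : exists xt yt xs b,
    approx_normal Phi xb yb u gamma (3 * 2 `^ (gamma - 1)) k xt yt xs b.
  have [x [y [D fp]]] := failure_point_of_not_subreg Pxb r0 u1 not_subreg k.
  by apply: (exists_approx_normal gamma_ge1 _ fp); exact: gph_closed.
have [l l_neq0 /ker_le l_eq0] := approx_normals_kernel approx.
by rewrite l_eq0 eqxx in l_neq0.
Qed.
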